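(* Let $G$ be a finite abstract simplicial complex with connection matrix $L$. Then $\det(L)=\phi(G)$, where $\phi(G)=\prod_{x\in G}\omega(x)\in\{-1,1\}$.
   Context: A finite abstract simplicial complex $G$ is a finite set of non-empty finite sets closed under taking non-empty subsets; its elements are called simplices. For $x\in G$ let $\dim(x)=|x|-1$ and $\omega(x)=(-1)^{\dim(x)}$. The connection matrix $L$ of $G$ is the $|G|\times|G|$ matrix indexed by the simplices of $G$ with $L(x,y)=1$ if $x\cap y\neq\emptyset$ and $L(x,y)=0$ otherwise. The number $\phi(G)=\prod_{x\in G}\omega(x)$ is called the Fermi characteristic. *)

From mathcomp Require Import all_boot all_order all_algebra.
Set Implicit Arguments. Unset Strict Implicit. Unset Printing Implicit Defensive.
Import GRing.Theory Num.Theory.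
Local Open Scope ring_scope.

Definition simplicial_complex (V : finType) (G : {set {set V}}) : Prop :=
  (forall x, x \in G -> x != set0) /\
  (forall x y : {set V}, x \in G -> y \subset x -> y != set0 -> y \in G).

Definition sdim (V : finType) (x : {set V}) : nat := (#|x| - 1)%N.

Definition omega (V : finType) (x : {set V}) : int := (-1) ^+ sdim x.

Definition fermi (V : finType) (G : {set {set V}}) : int :=
  \prod_(x in G) omega x.

Definition connection_matrix (V : finType) (G : {set {set V}})
  : 'M[int]_(#|G|) :=
  \matrix_(i < #|G|, j < #|G|)
     (if (enum_val i :&: enum_val j) != set0 then 1 else 0).

From mathcomp Require Import all_boot all_order all_algebra fingroup perm.
Set Implicit Arguments. Unset Strict Implicit. Unset Printing Implicit Defensive.
Import GRing.Theory.
Local Open Scope ring_scope.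

(* The connection matrix factors as L = B D B^T, where B(x, z) = [z ⊆ x] is the
   face-incidence matrix and D = diag(omega).  By closure under subsets,
   (B D B^T)(x, y) is the sum of omega(z) over the non-empty z ⊆ x ∩ y, and this
   alternating sum is 1 if x ∩ y ≠ ∅ and 0 otherwise.  A permutation sending every
   simplex to a face of itself preserves the total size of the simplices, hence
   is the identity; so det B = 1 and det L = det D = phi(G). *)

Lemma sum_subset_sign (R : pzRingType) (V : finType) (S : {set V}) :
  \sum_(z : {set V} | z \subset S) (-1) ^+ #|z| = (S == set0)%:R :> R.
Proof.
have [->|S0] := eqVneq S set0.
  rewrite (eq_bigl (pred1 (set0 : {set V}))) => [|z]; last exact: subset0.
  by rewrite big_pred1_eq cards0.
have [a aS] := set0Pn _ S0.
rewrite (bigID (fun z : {set V} => a \in z)) /=.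
rewrite (reindex_onto (fun w => a |: w) (fun z => z :\ a)) /=; last first.
  by move=> z /andP[_ az]; rewrite setD1K.
have add_a w : (a |: w \subset S) && (a \in a |: w) && ((a |: w) :\ a == w) =
               (w \subset S) && (a \notin w).
  rewrite subUset sub1set aS setU11 andbT.
  have [aw|aw] := boolP (a \in w); last by rewrite setU1K // eqxx.
  suff /negbTE -> : (a |: w) :\ a != w by rewrite andbF.
  by apply: contraTneq aw => <-; rewrite !inE eqxx.
rewrite (eq_bigl _ _ add_a).
under eq_bigr => w /andP[_ aw] do rewrite cardsU1 aw add1n exprS mulN1r.
by rewrite sumrN addNr.
Qed.

Lemma omega_nonempty (V : finType) (z : {set V}) :
  z != set0 -> omega z = - (-1) ^+ #|z|.
Proof.
rewrite -card_gt0 /omega /sdim; case: #|z| => [|m] // _.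
by rewrite subn1 /= exprS mulN1r opprK.
Qed.

Lemma sum_omega_nonempty_subsets (V : finType) (S : {set V}) :
  \sum_(z : {set V} | (z \subset S) && (z != set0)) omega z = (S != set0)%:R.
Proof.
under eq_bigr => z /andP[_ z0] do rewrite (omega_nonempty z0).
have := sum_subset_sign int S.
rewrite (bigD1 set0) ?sub0set //= cards0 expr0 sumrN => /(canRL (addKr 1)) ->.
by case: (S == set0); rewrite /= ?addNr ?oppr0 ?addr0 ?opprK.
Qed.

Lemma sum_omega_faces (V : finType) (G : {set {set V}}) (x y : {set V}) :
  simplicial_complex G -> x \in G ->
  \sum_(z in G | z \subset x :&: y) omega z = (x :&: y != set0)%:R.
Proof.
move=> [G_nonempty G_closed] xG; rewrite -sum_omega_nonempty_subsets.
apply: eq_bigl => z; rewrite andbC; have [zxy|] //= := boolP (z \subset x :&: y).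
apply/idP/idP => [/G_nonempty //|]; apply: G_closed xG _.
exact: subset_trans zxy (subsetIl x y).
Qed.

Definition subset_mx (R : pzSemiRingType) (V : finType) n (f : 'I_n -> {set V})
  : 'M[R]_n := \matrix_(i, j) (f j \subset f i)%:R.

Lemma perm_subset_eq1 (V : finType) n (f : 'I_n -> {set V}) (s : 'S_n) :
  injective f -> (forall i, f (s i) \subset f i) -> s = 1%g.
Proof.
move=> f_inj fs_sub; apply/permP => i; rewrite perm1; apply: f_inj.
have card_le j : true -> (#|f (s j)| <= #|f j| ?= iff (#|f (s j)| == #|f j|))%N.
  by move=> _; split; [apply: subset_leq_card | ].
have [_] := leqif_sum card_le.
rewrite [X in (_ == X)%N](reindex_inj (@perm_inj _ s)) eqxx.
move=> /esym /forallP /(_ i) /= /eqP card_eq.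
by apply/eqP; rewrite eqEcard fs_sub card_eq /=.
Qed.

Lemma det_subset_mx (R : comPzRingType) (V : finType) n (f : 'I_n -> {set V}) :
  injective f -> \det (subset_mx R f) = 1.
Proof.
move=> f_inj; rewrite /determinant (bigD1 1%g) //= odd_perm1 expr0 mul1r.
rewrite big1 => [|i _]; last by rewrite mxE perm1 subxx.
rewrite big1 ?addr0 // => s s1.
have [i /negbTE fsi] : exists i, ~~ (f (s i) \subset f i).
  apply/forallPn; apply: contra s1 => /forallP /(perm_subset_eq1 f_inj) ->.
  exact: eqxx.
by rewrite (bigD1 i) //= mxE fsi mul0r mulr0.
Qed.

Lemma connection_matrix_factor (V : finType) (G : {set {set V}}) :
  simplicial_complex G ->
  let B := subset_mx int (enum_val : 'I_#|G| -> {set V}) in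
  connection_matrix G = B *m diag_mx (\row_j omega (enum_val j)) *m B^T.
Proof.
move=> hG /=; apply/matrixP => i k; rewrite mul_mx_diag !mxE.
under eq_bigr => j _ do rewrite !mxE.
set x := enum_val i; set y := enum_val k.
rewrite -(big_enum_val (fun z : {set V} => (z \subset x)%:R * omega z * (z \subset y)%:R)).
rewrite (eq_bigr (fun z : {set V} => if z \subset x :&: y then omega z else 0)) => [|z _].
  by rewrite -big_mkcondr sum_omega_faces ?enum_valP //; case: (_ != set0).
by rewrite subsetI; case: (z \subset x); case: (z \subset y);
  rewrite ?mul1r ?mulr1 ?mul0r ?mulr0.
Qed.

Theorem theorem1 (V : finType) (G : {set {set V}}) :
  simplicial_complex G ->
  \det (connection_matrix G) = fermi G.
Proof.
move=> hG; rewrite (connection_matrix_factor hG) !det_mulmx det_tr.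
rewrite det_subset_mx ?mul1r ?mulr1; last exact: enum_val_inj.
by rewrite det_diag /fermi [RHS]big_enum_val; apply: eq_bigr => i _; rewrite mxE.
Qed.
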